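(* For $0<p<q<1$, \[ (1-q)\,d(p,q)\le d_{\mathrm{Pois}}(p,q)\le d(p,q). \]
   Context: $d(p,q)=p\log(p/q)+(1-p)\log((1-p)/(1-q))$ is the Bernoulli Kullback–Leibler divergence and $d_{\mathrm{Pois}}(p,q)=p\log(p/q)+q-p$ the Poisson Kullback–Leibler divergence. *)

From Stdlib Require Import Reals.
Open Scope R_scope.

Definition kl_bern (p q : R) : R :=
  p * ln (p / q) + (1 - p) * ln ((1 - p) / (1 - q)).

Definition kl_pois (p q : R) : R :=
  p * ln (p / q) + q - p.

(** The upper bound is [ln y <= y - 1] applied to [(1 - q) / (1 - p)]. For the
    lower bound, [g x := d_Pois(x, q) - (1 - q) d(x, q)] vanishes at [x = q] and
    has derivative [g' x = - d(q, x) <= 0], so [g p >= g q = 0] for [p < q]. *)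

From Stdlib Require Import Reals Lra.
From Coquelicot Require Import Coquelicot.
Open Scope R_scope.

Lemma ln_le_sub1 (y : R) : 0 < y -> ln y <= y - 1.
Proof.
  intros Hy.
  pose proof (exp_ineq1_le (ln y)) as Hexp.
  rewrite exp_ln in Hexp; lra.
Qed.

Lemma sub_le_mul_ln_div (a b : R) : 0 < a -> 0 < b -> a - b <= a * ln (a / b).
Proof.
  intros Ha Hb.
  assert (Hba : ln (b / a) <= b / a - 1) by (apply ln_le_sub1, Rdiv_lt_0_compat; lra).
  rewrite ln_div in Hba by lra; rewrite ln_div by lra.
  assert (Hscaled : a * (ln b - ln a) <= a * (b / a - 1)) by (apply Rmult_le_compat_l; lra).
  replace (a * (b / a - 1)) with (b - a) in Hscaled by (field; lra).
  lra.
Qed.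

Lemma kl_bern_ge0 (p q : R) : 0 < p < 1 -> 0 < q < 1 -> 0 <= kl_bern p q.
Proof.
  intros Hp Hq; unfold kl_bern.
  pose proof (sub_le_mul_ln_div p q ltac:(lra) ltac:(lra)).
  pose proof (sub_le_mul_ln_div (1 - p) (1 - q) ltac:(lra) ltac:(lra)).
  lra.
Qed.

Lemma kl_pois_le_kl_bern (p q : R) : p < 1 -> q < 1 -> kl_pois p q <= kl_bern p q.
Proof.
  intros Hp Hq; unfold kl_bern, kl_pois.
  pose proof (sub_le_mul_ln_div (1 - p) (1 - q) ltac:(lra) ltac:(lra)).
  lra.
Qed.

Lemma is_derive_kl_gap (q x : R) : 0 < q < 1 -> 0 < x < 1 ->
  is_derive (fun y => kl_pois y q - (1 - q) * kl_bern y q) x (- kl_bern q x).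
Proof.
  intros Hq Hx; unfold kl_bern, kl_pois.
  auto_derive.
  - repeat split; apply Rdiv_lt_0_compat; lra.
  - replace (1 + - x) with (1 - x) by ring.
    rewrite <- !Rdiv_def, !ln_div by lra.
    field; lra.
Qed.

Lemma scaled_kl_bern_le_kl_pois (p q : R) : 0 < p -> p < q -> q < 1 ->
  (1 - q) * kl_bern p q <= kl_pois p q.
Proof.
  intros Hp Hpq Hq.
  set (gap := fun x => kl_pois x q - (1 - q) * kl_bern x q).
  assert (Hderiv : forall x, p <= x <= q -> derivable_pt_lim gap x (- kl_bern q x)).
  { intros x Hx; apply is_derive_Reals, is_derive_kl_gap; lra. }
  destruct (MVT_cor2 gap (fun x => - kl_bern q x) p q Hpq Hderiv) as [c [Hmvt Hc]].
  assert (Hgibbs : 0 <= kl_bern q c) by (apply kl_bern_ge0; lra).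
  assert (Hgap_q : gap q = 0).
  { unfold gap, kl_bern, kl_pois; rewrite !Rdiv_diag, ln_1 by lra; ring. }
  assert (Hgap_p : 0 <= gap p).
  { assert (0 <= kl_bern q c * (q - p)) by (apply Rmult_le_pos; lra).
    lra. }
  unfold gap in Hgap_p; lra.
Qed.

Theorem lemma8 (p q : R) (hp : 0 < p) (hpq : p < q) (hq : q < 1) :
  (1 - q) * kl_bern p q <= kl_pois p q /\ kl_pois p q <= kl_bern p q.
Proof.
  split.
  - exact (scaled_kl_bern_le_kl_pois p q hp hpq hq).
  - apply kl_pois_le_kl_bern; lra.
Qed.
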